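(* Let $P$ be the barycentric subdivision of a simplicial complex $K$. Then the interval monoid $\mathcal{M}(P)$ is a gcd-monoid.
   Context: A simplicial complex $K$ is a collection of nonempty finite subsets (simplices) of a vertex set with all singletons simplices and closed under nonempty subsets. Its barycentric subdivision is the poset of all simplices of $K$ ordered by inclusion. For a poset $P$, $\mathcal{M}(P)$ is the monoid presented by generators $[x,y]$ for $x\le y$ in $P$, relations $[x,x]=1$ and $[x,z]=[x,y][y,z]$ for $x\le y\le z$. A gcd-monoid is a monoid that is conical ($xy=1\Rightarrow x=1$), left and right cancellative, and in which any two elements have a greatest lower bound for left divisibility ($a\leqslant b$ iff $b=ax$ for some $x$) and for right divisibility ($a\mathbin{\widetilde\leqslant}b$ iff $b=xa$ for some $x$). *)

From Stdlib Require Import List Relations.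
Import ListNotations.
Set Implicit Arguments.

(* A simplex is a subset of the vertex type V, represented as a predicate. *)
Definition finite_pred (V : Type) (S : V -> Prop) : Prop :=
  exists l : list V, forall v, S v <-> In v l.

Definition subpred (V : Type) (S T : V -> Prop) : Prop := forall v, S v -> T v.

Record simplicial_complex (V : Type) (K : (V -> Prop) -> Prop) : Prop := {
  sc_nonempty : forall S, K S -> exists v, S v;
  sc_finite : forall S, K S -> finite_pred S;
  sc_singleton : forall v : V, K (fun u => u = v);
  sc_down : forall S T, K S -> (exists v, T v) -> subpred T S -> K T
}.

(* A poset P is given by a carrier predicate inP on a type T and an order le.
   Words in the generators [x,y] (x <= y in P) are lists of pairs (x,y). *)
Definition gen_ok (T : Type) (inP : T -> Prop) (le : T -> T -> Prop) (p : T * T) : Prop :=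
  inP (fst p) /\ inP (snd p) /\ le (fst p) (snd p).

Definition word_ok (T : Type) (inP : T -> Prop) (le : T -> T -> Prop) (w : list (T * T)) : Prop :=
  Forall (gen_ok inP le) w.

Inductive mstep (T : Type) (inP : T -> Prop) (le : T -> T -> Prop) :
    list (T * T) -> list (T * T) -> Prop :=
| mstep_id : forall x u w, inP x ->
    mstep inP le (u ++ (x, x) :: w) (u ++ w)
| mstep_split : forall x y z u w, inP x -> inP y -> inP z -> le x y -> le y z ->
    mstep inP le (u ++ (x, z) :: w) (u ++ (x, y) :: (y, z) :: w).

Definition meq (T : Type) (inP : T -> Prop) (le : T -> T -> Prop) :
    list (T * T) -> list (T * T) -> Prop :=
  clos_refl_sym_trans _ (mstep inP le).

(* ---------- gcd-monoids, for a monoid presented as words modulo a congruence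
   (product = concatenation, unit = empty word) ---------- *)
Section GcdMonoid.
Variables (A : Type) (ok : list A -> Prop) (eqv : list A -> list A -> Prop).

Definition ldiv (a b : list A) : Prop := exists x, ok x /\ eqv b (a ++ x).
Definition rdiv (a b : list A) : Prop := exists x, ok x /\ eqv b (x ++ a).

Definition is_gcd_monoid : Prop :=
  (forall x y, ok x -> ok y -> eqv (x ++ y) [] -> eqv x []) /\
  (forall c a b, ok c -> ok a -> ok b -> eqv (c ++ a) (c ++ b) -> eqv a b) /\
  (forall c a b, ok c -> ok a -> ok b -> eqv (a ++ c) (b ++ c) -> eqv a b) /\
  (forall a b, ok a -> ok b -> exists d, ok d /\ ldiv d a /\ ldiv d b /\
      forall e, ok e -> ldiv e a -> ldiv e b -> ldiv e d) /\
  (forall a b, ok a -> ok b -> exists d, ok d /\ rdiv d a /\ rdiv d b /\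
      forall e, ok e -> rdiv e a -> rdiv e b -> rdiv e d).
End GcdMonoid.

Definition interval_monoid_gcd (T : Type) (inP : T -> Prop) (le : T -> T -> Prop) : Prop :=
  is_gcd_monoid (word_ok inP le) (meq inP le).

From Stdlib Require Import List Relations.
From Stdlib Require Import ClassicalEpsilon FunctionalExtensionality PropExtensionality.
Import ListNotations.
Set Implicit Arguments.

(* A word in the generators [x,y] has a unique normal form, obtained by deleting the
   letters [x,x] and merging composable neighbours [x,y][y,z] into [x,z]; normal forms
   are the words without trivial letters and without composable neighbours. This makes
   M(P) conical and left cancellative, and a normal form d left-divides a normal form a
   iff d is a prefix of a, except that its last letter may be a lower part [x,m] of the
   corresponding letter [x,y] of a. The left gcd of two normal forms is then their
   longest common prefix followed by [x, y /\ y'] at the first letters [x,y], [x,y']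
   where they differ; in the barycentric subdivision this meet is the intersection of
   two faces containing x. Reversing words turns the right-hand properties into the
   left-hand ones for the opposite order, where the meet becomes the union of two faces
   of a common face. *)

Record partial_order (T : Type) (le : T -> T -> Prop) : Prop := {
  le_refl : forall a, le a a;
  le_antisym : forall a b, le a b -> le b a -> a = b;
  le_trans : forall a b c, le a b -> le b c -> le a c
}.

Lemma partial_order_dual (T : Type) (le : T -> T -> Prop) :
  partial_order le -> partial_order (fun a b => le b a).
Proof.
  intros [Hrefl Hanti Htrans]; split; eauto.
Qed.

Definition interval_meets (T : Type) (inP : T -> Prop) (le : T -> T -> Prop) : Prop :=
  forall x y y', inP x -> inP y -> inP y' -> le x y -> le x y' ->
  exists m, inP m /\ le x m /\ le m y /\ le m y' /\
    forall t, inP t -> le x t -> le t y -> le t y' -> le t m.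

Section NormalForms.
Variables (T : Type) (inP : T -> Prop) (le : T -> T -> Prop).
Variable eq_dec : forall a b : T, {a = b} + {a <> b}.
Hypothesis Hle : partial_order le.

Notation word := (list (T * T)).
Notation ok := (word_ok inP le).
Notation meq := (meq inP le).

Definition push (g : T * T) (r : word) : word :=
  let (x, y) := g in
  if eq_dec x y then r else
  match r with
  | (y', z) :: r' => if eq_dec y y' then (x, z) :: r' else (x, y) :: r
  | [] => [(x, y)]
  end.

Definition act (u s : word) : word := fold_right push s u.

Definition nf (u : word) : word := act u [].

Definition not_from (y : T) (w : word) : Prop :=
  match w with (x, _) :: _ => y <> x | [] => True end.

Fixpoint reduced (w : word) : Prop :=
  match w with
  | [] => True
  | (x, y) :: w' => x <> y /\ not_from y w' /\ reduced w'
  end.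

Lemma push_id x r : push (x, x) r = r.
Proof. unfold push; destruct (eq_dec x x); congruence. Qed.

Lemma push_comp x y z r :
  le x y -> le y z -> push (x, y) (push (y, z) r) = push (x, z) r.
Proof.
  intros Hxy Hyz.
  destruct (eq_dec y z) as [<-|Hyz']; [now rewrite push_id|].
  destruct (eq_dec x y) as [<-|Hxy']; [now rewrite push_id|].
  assert (Hxz : x <> z) by (intros <-; apply Hxy', (le_antisym Hle); assumption).
  unfold push.
  destruct (eq_dec y z); try congruence.
  destruct (eq_dec x z); try congruence.
  destruct (eq_dec x y); try congruence.
  destruct r as [|[z' w] r]; [|destruct (eq_dec z z')];
    destruct (eq_dec y y); congruence.
Qed.

Lemma act_app u w s : act (u ++ w) s = act u (act w s).
Proof. apply fold_right_app. Qed.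

Lemma nf_app u w : nf (u ++ w) = act u (nf w).
Proof. apply act_app. Qed.

Lemma nf_mstep a b : mstep inP le a b -> nf a = nf b.
Proof.
  intros [x u w _ | x y z u w _ _ _ Hxy Hyz]; rewrite !nf_app; unfold nf, act; cbn [fold_right].
  - now rewrite push_id.
  - now rewrite push_comp.
Qed.

Lemma nf_meq a b : meq a b -> nf a = nf b.
Proof. induction 1; eauto using nf_mstep; congruence. Qed.

Lemma push_ok g r : gen_ok inP le g -> ok r -> ok (push g r).
Proof.
  destruct g as [x y]; intros Hg Hr; unfold push.
  destruct (eq_dec x y); [assumption|].
  destruct r as [|[y' z] r']; [now constructor|].
  destruct (eq_dec y y') as [<-|]; [|now constructor].
  inversion_clear Hr as [|? ? (Hy & Hz & Hyz) Hr'].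
  destruct Hg as (Hx & _ & Hxy).
  constructor; [|assumption].
  repeat split; [exact Hx | exact Hz | exact (le_trans Hle _ _ _ Hxy Hyz)].
Qed.

Lemma push_reduced g r : gen_ok inP le g -> ok r -> reduced r -> reduced (push g r).
Proof.
  destruct g as [x y]; intros (_ & _ & Hxy) Hr Hred; unfold push.
  destruct (eq_dec x y) as [|Hne]; [assumption|].
  destruct r as [|[y' z] r']; [now cbn|].
  destruct (eq_dec y y') as [<-|]; [|now cbn].
  destruct Hred as (_ & Hnf & Hred'); repeat split; try assumption.
  intros <-; inversion_clear Hr as [|? ? (_ & _ & Hyx) _].
  apply Hne, (le_antisym Hle); assumption.
Qed.

Lemma act_ok_reduced u s : ok u -> ok s -> reduced s -> ok (act u s) /\ reduced (act u s).
Proof.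
  induction 1 as [|g u Hg Hu IH]; intros Hs Hr; [now split|].
  destruct (IH Hs Hr); cbn; auto using push_ok, push_reduced.
Qed.

Lemma nf_ok w : ok w -> ok (nf w).
Proof. intros Hw; apply act_ok_reduced; now try constructor. Qed.

Lemma nf_reduced w : ok w -> reduced (nf w).
Proof. intros Hw; apply act_ok_reduced; now try constructor. Qed.

Lemma meq_cons g a b : meq a b -> meq (g :: a) (g :: b).
Proof.
  induction 1 as [a b [x u w Hx | x y z u w Hx Hy Hz Hxy Hyz]| | |].
  - apply rst_step, (mstep_id inP le x (g :: u) w Hx).
  - apply rst_step, (mstep_split inP le x y z (g :: u) w Hx Hy Hz Hxy Hyz).
  - apply rst_refl.
  - now apply rst_sym.
  - eapply rst_trans; eassumption.
Qed.

Lemma meq_push g r : gen_ok inP le g -> ok r -> meq (g :: r) (push g r).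
Proof.
  destruct g as [x y]; intros (Hx & Hy & Hxy) Hr; cbn in *; unfold push.
  destruct (eq_dec x y) as [<-|]; [apply rst_step, (mstep_id inP le x [] r Hx)|].
  destruct r as [|[y' z] r']; [apply rst_refl|].
  destruct (eq_dec y y') as [<-|]; [|apply rst_refl].
  inversion_clear Hr as [|? ? (_ & Hz & Hyz) _].
  apply rst_sym, rst_step, (mstep_split inP le x y z [] r' Hx Hy Hz Hxy Hyz).
Qed.

Lemma meq_nf w : ok w -> meq w (nf w).
Proof.
  induction 1 as [|g w Hg Hw IH]; [apply rst_refl|].
  eapply rst_trans; [apply meq_cons, IH|].
  apply meq_push; auto using nf_ok.
Qed.

Lemma meq_iff_nf a b : ok a -> ok b -> meq a b <-> nf a = nf b.
Proof.
  intros Ha Hb; split; [apply nf_meq|intros E].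
  eapply rst_trans; [apply meq_nf, Ha|].
  rewrite E; apply rst_sym, meq_nf, Hb.
Qed.

Lemma act_push g r s : gen_ok inP le g -> ok r -> act (push g r) s = push g (act r s).
Proof.
  destruct g as [x y]; intros (_ & _ & Hxy) Hr; unfold push at 1.
  destruct (eq_dec x y) as [<-|]; [now rewrite push_id|].
  destruct r as [|[y' z] r']; [reflexivity|].
  destruct (eq_dec y y') as [<-|]; [|reflexivity].
  inversion_clear Hr as [|? ? (_ & _ & Hyz) _]; unfold act; cbn [fold_right].
  now rewrite push_comp.
Qed.

Lemma act_nf u s : ok u -> act u s = act (nf u) s.
Proof.
  induction 1 as [|g u Hg Hu IH]; [reflexivity|].
  change (push g (act u s) = act (push g (nf u)) s).
  rewrite IH, act_push; auto using nf_ok.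
Qed.

Lemma push_reduced_cons x y w : x <> y -> not_from y w -> push (x, y) w = (x, y) :: w.
Proof.
  intros Hxy Hw; unfold push; destruct (eq_dec x y); try congruence.
  destruct w as [|[y' z] w']; [reflexivity|].
  destruct (eq_dec y y'); [contradiction|reflexivity].
Qed.

Lemma nf_id_reduced w : reduced w -> nf w = w.
Proof.
  induction w as [|[x y] w IH]; intros Hw; [reflexivity|].
  destruct Hw as (Hxy & Hyw & Hw); change (push (x, y) (nf w) = (x, y) :: w).
  rewrite IH by assumption; now apply push_reduced_cons.
Qed.

Lemma act_nil u s : act u s = [] -> s = [] /\ nf u = [].
Proof.
  induction u as [|[x y] u IH]; intros H; [now split|].
  change (push (x, y) (act u s) = []) in H; unfold push in H.
  destruct (eq_dec x y) as [<-|];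
    [|destruct (act u s) as [|[y' z] r]; [|destruct (eq_dec y y')]; discriminate].
  destruct (IH H) as [-> Hu]; split; [reflexivity|].
  change (push (x, x) (nf u) = []); now rewrite Hu, push_id.
Qed.

Lemma meq_conical a b : ok a -> ok b -> meq (a ++ b) [] -> meq a [].
Proof.
  intros Ha Hb H; apply meq_iff_nf; try constructor; try assumption.
  apply nf_meq in H; rewrite nf_app in H; now apply act_nil in H.
Qed.

Lemma push_inj x y r1 r2 :
  x <> y -> reduced r1 -> reduced r2 -> push (x, y) r1 = push (x, y) r2 -> r1 = r2.
Proof.
  intros Hxy H1 H2; unfold push; destruct (eq_dec x y); try contradiction.
  destruct r1 as [|[a1 b1] r1]; destruct r2 as [|[a2 b2] r2]; cbn in H1, H2;
  repeat match goal with |- context [eq_dec ?a ?b] => destruct (eq_dec a b) end;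
  intros E; inversion E; subst; intuition congruence.
Qed.

Lemma act_inj u s1 s2 : ok u -> ok s1 -> reduced s1 -> ok s2 -> reduced s2 ->
  act u s1 = act u s2 -> s1 = s2.
Proof.
  induction 1 as [|[x y] u Hg Hu IH]; intros O1 R1 O2 R2 E; [exact E|].
  change (push (x, y) (act u s1) = push (x, y) (act u s2)) in E.
  destruct (eq_dec x y) as [<-|Hxy].
  - rewrite !push_id in E; auto.
  - apply push_inj in E; try apply act_ok_reduced; auto.
Qed.

Lemma meq_lcancel c a b : ok c -> ok a -> ok b -> meq (c ++ a) (c ++ b) -> meq a b.
Proof.
  intros Hc Ha Hb H; apply nf_meq in H; rewrite !nf_app in H.
  apply meq_iff_nf; try assumption.
  apply (act_inj Hc); auto using nf_ok, nf_reduced.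
Qed.

Inductive pprefix : word -> word -> Prop :=
| pprefix_nil a : pprefix [] a
| pprefix_part x m y a : inP m -> x <> m -> le x m -> le m y -> pprefix [(x, m)] ((x, y) :: a)
| pprefix_cons g r a : pprefix r a -> pprefix (g :: r) (g :: a).

Lemma pprefix_cons_inv p q e x y a : pprefix ((p, q) :: e) ((x, y) :: a) ->
  p = x /\ ((e = [] /\ inP q /\ x <> q /\ le x q /\ le q y) \/ (q = y /\ pprefix e a)).
Proof. inversion 1; subst; auto 7. Qed.

Lemma pprefix_cons_le p q e x y a : pprefix ((p, q) :: e) ((x, y) :: a) -> le q y.
Proof.
  intros H; apply pprefix_cons_inv in H as [_ [(_ & _ & _ & _ & Hqy)|[-> _]]];
    [assumption|apply (le_refl Hle)].
Qed.

Lemma pprefix_ok d a : ok a -> pprefix d a -> ok d.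
Proof.
  intros Ha H; revert Ha; induction H as [a|x m y a Hm _ Hxm _|g r a _ IH]; intros Ha.
  - constructor.
  - inversion_clear Ha as [|? ? (Hx & _ & _) _].
    constructor; [now repeat split|constructor].
  - inversion_clear Ha as [|? ? Hg Ha']; constructor; [exact Hg|exact (IH Ha')].
Qed.

Lemma pprefix_not_from y d a : pprefix d a -> not_from y a -> not_from y d.
Proof. destruct 1; cbn; auto. Qed.

Lemma pprefix_reduced d a : reduced a -> pprefix d a -> reduced d.
Proof.
  intros Ha H; revert Ha; induction H as [a|x m y a _ Hxm _ _|[x y] r a Hr IH]; intros Ha.
  - exact I.
  - now repeat split.
  - destruct Ha as (Hxy & Hya & Ha); repeat split; eauto using pprefix_not_from.
Qed.

Lemma push_head x y r : x <> y -> exists z w, push (x, y) r = (x, z) :: w.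
Proof.
  intros Hxy; unfold push; destruct (eq_dec x y); try contradiction.
  destruct r as [|[y' z] r]; eauto; destruct (eq_dec y y'); eauto.
Qed.

Lemma pprefix_act r s : ok r -> reduced r -> ok s -> pprefix r (act r s).
Proof.
  induction 1 as [|[x y] r (Hx & Hy & Hxy) Hr IH]; intros Rr Hs; [constructor|].
  destruct Rr as (Hne & Hyr & Rr).
  change (pprefix ((x, y) :: r) (push (x, y) (act r s))); unfold push.
  destruct (eq_dec x y); try contradiction.
  assert (IH' := IH Rr Hs).
  destruct (act r s) as [|[y' z] t] eqn:Et; [now constructor|].
  destruct (eq_dec y y') as [<-|]; [|now constructor].
  destruct r as [|[p q] r].
  - cbn in Et; subst s; inversion_clear Hs as [|? ? (_ & _ & Hyz) _].
    now constructor.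
  - destruct Rr as (Hpq & _ & _); cbn in Hyr.
    destruct (push_head (act r s) Hpq) as (z0 & w0 & E0).
    change (push (p, q) (act r s) = (y, z) :: t) in Et.
    rewrite E0 in Et; injection Et; congruence.
Qed.

Lemma act_of_pprefix r a : ok a -> reduced a -> pprefix r a ->
  exists s, ok s /\ reduced s /\ a = act r s.
Proof.
  intros Oa Ra H; revert Oa Ra.
  induction H as [a|x m y a Hm Hxm Hlxm Hmy|[x y] r a _ IH]; intros Oa Ra.
  - now exists a.
  - inversion_clear Oa as [|? ? (Hx & Hy & _) Oa'].
    destruct Ra as (Hxy & Hya & Ra).
    destruct (eq_dec m y) as [<-|Hmy'].
    + exists a; repeat split; try assumption.
      cbn; symmetry; now apply push_reduced_cons.
    + exists ((m, y) :: a); repeat split; try (constructor; repeat split); try assumption.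
      cbn; unfold push.
      destruct (eq_dec x m); try contradiction; now destruct (eq_dec m m).
  - inversion_clear Oa as [|? ? _ Oa']; destruct Ra as (Hxy & Hya & Ra).
    destruct (IH Oa' Ra) as (s & Os & Rs & ->).
    exists s; repeat split; try assumption.
    cbn; symmetry; now apply push_reduced_cons.
Qed.

Lemma ldiv_iff_pprefix d a : ok d -> ok a -> ldiv ok meq d a <-> pprefix (nf d) (nf a).
Proof.
  intros Od Oa; split.
  - intros (x & Ox & Ex); apply nf_meq in Ex.
    rewrite Ex, nf_app, (act_nf _ Od).
    apply pprefix_act; auto using nf_ok, nf_reduced.
  - intros H; destruct (act_of_pprefix (nf_ok Oa) (nf_reduced Oa) H) as (s & Os & Rs & E).
    exists s; split; [assumption|].
    apply meq_iff_nf; [assumption|now apply Forall_app|].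
    now rewrite E, nf_app, (nf_id_reduced _ Rs), <- (act_nf _ Od).
Qed.

Lemma pprefix_cons_diverge p q e x y y' a b : y <> y' ->
  pprefix ((p, q) :: e) ((x, y) :: a) -> pprefix ((p, q) :: e) ((x, y') :: b) ->
  p = x /\ e = [] /\ inP q /\ x <> q /\ le x q /\ le q y /\ le q y'.
Proof.
  intros Hyy' Ha Hb.
  assert (Hqy := pprefix_cons_le Ha); assert (Hqy' := pprefix_cons_le Hb).
  apply pprefix_cons_inv in Ha as [-> [Ha|[-> _]]]; [tauto|].
  apply pprefix_cons_inv in Hb as [_ [Hb|[? _]]]; [tauto|contradiction].
Qed.

Hypothesis Hmeets : interval_meets inP le.

Lemma pprefix_glb a b : ok a -> ok b -> exists d, pprefix d a /\ pprefix d b /\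
  forall e, pprefix e a -> pprefix e b -> pprefix e d.
Proof.
  revert b; induction a as [|[x y] a IH]; intros b Oa Ob.
  { exists []; repeat split; [constructor..|].
    intros e He _; inversion He; constructor. }
  destruct b as [|[x' y'] b].
  { exists []; repeat split; [constructor..|].
    intros e _ He; inversion He; constructor. }
  inversion_clear Oa as [|? ? (Hx & Hy & Hxy) Oa'].
  inversion_clear Ob as [|? ? (_ & Hy' & Hxy') Ob'].
  destruct (eq_dec x x') as [<-|Hxx'].
  2: { exists []; repeat split; [constructor..|].
       intros [|[p q] e] Ha Hb; [constructor|].
       apply pprefix_cons_inv in Ha as [-> _]; apply pprefix_cons_inv in Hb as [? _].
       contradiction. }
  destruct (eq_dec y y') as [<-|Hyy'].
  - destruct (IH b Oa' Ob') as (d & Hda & Hdb & Hd).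
    exists ((x, y) :: d); repeat split; try now constructor.
    intros [|[p q] e] Ha Hb; [constructor|].
    apply pprefix_cons_inv in Ha as [-> [(-> & Hq & Hxq & Hlxq & Hqy)|[-> Ha]]];
      [now constructor|].
    apply pprefix_cons_inv in Hb as [_ [(-> & _)|[_ Hb]]]; constructor; [constructor|auto].
  - destruct (Hmeets Hx Hy Hy' Hxy Hxy') as (m & Hm & Hxm & Hmy & Hmy' & Hglb).
    destruct (eq_dec x m) as [<-|Hxm'].
    + exists []; repeat split; [constructor..|].
      intros [|[p q] e] Ha Hb; [constructor|].
      destruct (pprefix_cons_diverge Hyy' Ha Hb) as (_ & _ & Hq & Hxq & Hlxq & Hqy & Hqy').
      contradict Hxq; apply (le_antisym Hle); auto.
    + exists [(x, m)]; repeat split; [now constructor..|].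
      intros [|[p q] e] Ha Hb; [constructor|].
      destruct (pprefix_cons_diverge Hyy' Ha Hb) as (-> & -> & Hq & Hxq & Hlxq & Hqy & Hqy').
      constructor; auto.
Qed.

Lemma ldiv_glb a b : ok a -> ok b -> exists d, ok d /\ ldiv ok meq d a /\ ldiv ok meq d b /\
  forall e, ok e -> ldiv ok meq e a -> ldiv ok meq e b -> ldiv ok meq e d.
Proof.
  intros Oa Ob.
  destruct (pprefix_glb (nf_ok Oa) (nf_ok Ob)) as (d & Hda & Hdb & Hd).
  assert (Od : ok d) by exact (pprefix_ok (nf_ok Oa) Hda).
  assert (Ed : nf d = d) by exact (nf_id_reduced _ (pprefix_reduced (nf_reduced Oa) Hda)).
  exists d; rewrite !ldiv_iff_pprefix, Ed by assumption; repeat split; try assumption.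
  intros e Oe; rewrite !ldiv_iff_pprefix, Ed by assumption; apply Hd.
Qed.

End NormalForms.

Section Reversal.
Variable T : Type.

Definition swap_pair (p : T * T) : T * T := (snd p, fst p).

Definition op (w : list (T * T)) : list (T * T) := rev (map swap_pair w).

Lemma op_app u w : op (u ++ w) = op w ++ op u.
Proof. unfold op; now rewrite map_app, rev_app_distr. Qed.

Lemma op_op w : op (op w) = w.
Proof.
  unfold op; rewrite map_rev, rev_involutive, map_map.
  erewrite map_ext; [apply map_id|]; now intros [a b].
Qed.

End Reversal.

Lemma word_ok_op T (inP : T -> Prop) le w :
  word_ok inP le w -> word_ok inP (fun a b => le b a) (op w).
Proof.
  intros Hw; apply Forall_rev, Forall_map.
  eapply Forall_impl; [|exact Hw]; intros [a b] (? & ? & ?); now repeat split.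
Qed.

Lemma word_ok_op_iff T (inP : T -> Prop) le w :
  word_ok inP (fun a b => le b a) (op w) <-> word_ok inP le w.
Proof.
  split; [|apply word_ok_op].
  intros Hw; apply word_ok_op in Hw; now rewrite op_op in Hw.
Qed.

Lemma mstep_op T (inP : T -> Prop) le a b :
  mstep inP le a b -> mstep inP (fun a b => le b a) (op a) (op b).
Proof.
  intros [x u w Hx | x y z u w Hx Hy Hz Hxy Hyz]; rewrite !op_app; cbn;
    rewrite <- !app_assoc; cbn.
  - now apply mstep_id.
  - now apply mstep_split.
Qed.

Lemma meq_op T (inP : T -> Prop) le a b :
  meq inP le a b -> meq inP (fun a b => le b a) (op a) (op b).
Proof.
  induction 1; [apply rst_step, mstep_op; assumption|apply rst_refl|
    now apply rst_sym|eapply rst_trans; eassumption].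
Qed.

Lemma meq_op_iff T (inP : T -> Prop) le a b :
  meq inP (fun a b => le b a) (op a) (op b) <-> meq inP le a b.
Proof.
  split; [|apply meq_op].
  intros H; apply meq_op in H; now rewrite !op_op in H.
Qed.

Lemma rdiv_iff_ldiv_op T (inP : T -> Prop) le d a :
  rdiv (word_ok inP le) (meq inP le) d a <->
  ldiv (word_ok inP (fun a b => le b a)) (meq inP (fun a b => le b a)) (op d) (op a).
Proof.
  split; intros (x & Ox & Ex).
  - exists (op x); split; [now apply word_ok_op|].
    rewrite <- op_app; now apply meq_op.
  - exists (op x); split; [exact (word_ok_op Ox)|].
    apply meq_op in Ex; now rewrite op_app, !op_op in Ex.
Qed.

Theorem interval_monoid_gcd_of_meets T (inP : T -> Prop) le
  (eq_dec : forall a b : T, {a = b} + {a <> b}) (Hle : partial_order le)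
  (Hmeets : interval_meets inP le) (Hjoins : interval_meets inP (fun a b => le b a)) :
  interval_monoid_gcd inP le.
Proof.
  pose proof (partial_order_dual Hle) as Hge.
  split; [|split; [|split; [|split]]].
  - exact (meq_conical eq_dec Hle).
  - exact (meq_lcancel eq_dec Hle).
  - intros c a b Hc Ha Hb H.
    apply meq_op_iff; apply meq_op in H; rewrite !op_app in H.
    exact (meq_lcancel eq_dec Hge (word_ok_op Hc) (word_ok_op Ha) (word_ok_op Hb) H).
  - exact (ldiv_glb eq_dec Hle Hmeets).
  - intros a b Ha Hb.
    destruct (ldiv_glb eq_dec Hge Hjoins (word_ok_op Ha) (word_ok_op Hb))
      as (d & Od & Hda & Hdb & Hd).
    exists (op d); rewrite !rdiv_iff_ldiv_op, op_op.
    repeat split; [now apply word_ok_op_iff|assumption|assumption|].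
    intros e Oe; rewrite !rdiv_iff_ldiv_op, op_op; auto using word_ok_op.
Qed.

Lemma face_interval_meets V (K : (V -> Prop) -> Prop) :
  simplicial_complex K -> interval_meets K (@subpred V).
Proof.
  intros HK x y y' Kx Ky Ky' Hxy Hxy'.
  exists (fun v => y v /\ y' v); unfold subpred in *; split.
  - destruct (sc_nonempty HK x Kx) as [v Hv]; apply (sc_down HK Ky); firstorder.
  - firstorder.
Qed.

Lemma face_interval_joins V (K : (V -> Prop) -> Prop) :
  simplicial_complex K -> interval_meets K (fun S T => @subpred V T S).
Proof.
  intros HK x y y' Kx Ky Ky' Hyx Hy'x.
  exists (fun v => y v \/ y' v); unfold subpred in *; split.
  - destruct (sc_nonempty HK y Ky) as [v Hv]; apply (sc_down HK Kx); firstorder.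
  - firstorder.
Qed.

Lemma subpred_partial_order V : partial_order (@subpred V).
Proof.
  split; unfold subpred; auto.
  intros S T HST HTS; apply functional_extensionality; intros v.
  apply propositional_extensionality; split; auto.
Qed.

Theorem corollary7p9 (V : Type) (K : (V -> Prop) -> Prop)
  (HK : simplicial_complex K) :
  interval_monoid_gcd K (@subpred V).
Proof.
  apply interval_monoid_gcd_of_meets.
  - intros S T; apply excluded_middle_informative.
  - apply subpred_partial_order.
  - now apply face_interval_meets.
  - now apply face_interval_joins.
Qed.
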